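(* Let $H\in\mathbb{R}^{n\times d}$ have rank $h$, let $\Sigma\in\mathbb{R}^{n\times n}$ be symmetric positive definite, let $y\in\mathbb{R}^n$, $J\ge2$, and let $v_0^{(1)},\dots,v_0^{(J)}\in\mathbb{R}^d$ be an initial ensemble. Run deterministic EKI: $$v_{i+1}^{(j)}=v_i^{(j)}+\Gamma_iH^\top(H\Gamma_iH^\top+\Sigma)^{-1}(y-Hv_i^{(j)}),$$ where $\Gamma_i$ is the empirical covariance of the ensemble at step $i$. Let $v^*=(H^\top\Sigma^{-1}H)^\dagger H^\top\Sigma^{-1}y$ and $\omega_i^{(j)}=v_i^{(j)}-v^*$, and let $\mathbb{P},\mathbb{Q},\mathbb{N}$ be the projectors defined in the context. Then for every particle $j=1,\dots,J$: (a) $\|\mathbb{P}\omega_i^{(j)}\|=\mathcal{O}(i^{-1/2})$ as $i\to\infty$; (b) $\mathbb{Q}\omega_i^{(j)}=\mathbb{Q}\omega_0^{(j)}$ for all $i\ge0$; (c) $\mathbb{N}\omega_i^{(j)}=\mathbb{N}\omega_0^{(j)}$ for all $i\ge0$.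
   Context: $\dagger$ is the Moore–Penrose pseudoinverse; $H^+:=(H^\top\Sigma^{-1}H)^\dagger H^\top\Sigma^{-1}$. Empirical covariance: $\Gamma_i=\frac{1}{J-1}\sum_{j}(v_i^{(j)}-\bar v_i)(v_i^{(j)}-\bar v_i)^\top$, $\bar v_i=\frac1J\sum_jv_i^{(j)}$. Let $r$ be the number of positive eigenvalues of the pencil $H\Gamma_0H^\top w=\delta\Sigma w$. Let $w_1,\dots,w_n$ be a basis of $\mathbb{R}^n$ with $w_k^\top\Sigma w_l$ equal to $1$ if $k=l$ and $0$ otherwise, such that each $w_\ell$ is a generalized eigenvector of $(H\Gamma_iH^\top,\Sigma)$ for every $i\ge0$ (with eigenvalue $\delta_{\ell,i}$); $w_1,\dots,w_r\in\mathsf{Ran}(\Sigma^{-1}H)$ correspond to positive eigenvalues; $w_{r+1},\dots,w_h\in\mathsf{Ran}(\Sigma^{-1}H)$ correspond to eigenvalue zero; $w_{h+1},\dots,w_n$ form a basis of $\mathsf{Ker}(H^\top)$. Define $u_\ell=\frac{1}{\delta_{\ell,0}}\Gamma_0H^\top w_\ell$ for $\ell\le r$ and $u_\ell=H^+\Sigma w_\ell$ for $r<\ell\le h$; let $U=[u_1,\dots,u_h]$, $U_{k:l}$ its columns $k$ through $l$. Define $\mathbb{P}=U_{1:r}U_{1:r}^\top H^\top\Sigma^{-1}H$, $\mathbb{Q}=U_{r+1:h}U_{r+1:h}^\top H^\top\Sigma^{-1}H$, $\mathbb{N}=I-\mathbb{P}-\mathbb{Q}$. *)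

From HB Require Import structures.
From mathcomp Require Import all_boot all_order all_algebra.
From mathcomp Require Import reals.
From Stdlib Require Import ClassicalEpsilon.

Set Implicit Arguments.
Unset Strict Implicit.
Unset Printing Implicit Defensive.

Import Order.TTheory GRing.Theory Num.Theory.
Local Open Scope ring_scope.

Section EKIDefs.
Variable R : realType.

Definition penrose m n (A : 'M[R]_(m, n)) (X : 'M[R]_(n, m)) : Prop :=
  [/\ A *m X *m A = A, X *m A *m X = X,
      (A *m X)^T = A *m X & (X *m A)^T = X *m A].

(* Moore--Penrose pseudoinverse: the (unique, existing) matrix satisfying
   the Penrose conditions. *)
Definition pinv m n (A : 'M[R]_(m, n)) : 'M[R]_(n, m) :=
  epsilon (inhabits 0) (penrose A).

Definition spd n (S : 'M[R]_n) : Prop :=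
  S^T = S /\ forall x : 'cV[R]_n, x != 0 -> 0 < (x^T *m S *m x) 0 0.

Definition vnorm n (x : 'cV[R]_n) : R := Num.sqrt (\sum_i (x i 0) ^+ 2).

Definition emp_mean J d (v : 'I_J -> 'cV[R]_d) : 'cV[R]_d :=
  (J%:R)^-1 *: \sum_j v j.

Definition emp_cov J d (v : 'I_J -> 'cV[R]_d) : 'M[R]_d :=
  ((J.-1)%:R)^-1 *:
    \sum_j ((v j - emp_mean v) *m (v j - emp_mean v)^T).

Section EKI.
Variables (n d J : nat) (H : 'M[R]_(n, d)) (Sigma : 'M[R]_n) (y : 'cV[R]_n).

Definition eki_step (v : 'I_J -> 'cV[R]_d) : 'I_J -> 'cV[R]_d :=
  fun j => v j + emp_cov v *m H^T *m
             invmx (H *m emp_cov v *m H^T + Sigma) *m (y - H *m v j).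

Fixpoint eki (v0 : 'I_J -> 'cV[R]_d) (i : nat) : 'I_J -> 'cV[R]_d :=
  match i with
  | 0 => v0
  | i'.+1 => eki_step (eki v0 i')
  end.

Definition Hplus : 'M[R]_(d, n) :=
  pinv (H^T *m invmx Sigma *m H) *m H^T *m invmx Sigma.

Definition vstar : 'cV[R]_d := Hplus *m y.

(* u_l for a given basis w, eigenvalues delta0 l = delta_{l,0},
   Gamma0 = initial empirical covariance, and r *)
Definition ucol (Gamma0 : 'M[R]_d) (w : 'I_n -> 'cV[R]_n) (delta0 : 'I_n -> R)
  (r : nat) (l : 'I_n) : 'cV[R]_d :=
  if (l < r)%N then (delta0 l)^-1 *: (Gamma0 *m H^T *m w l)
  else Hplus *m Sigma *m w l.

(* P = U_{1:r} U_{1:r}^T H^T Sigma^-1 H  (U U^T = sum of outer products of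
   the columns); indices are 0-based here: columns 0..r-1 *)
Definition Pmx Gamma0 w delta0 (r : nat) : 'M[R]_d :=
  (\sum_(l < n | (l < r)%N)
      (ucol Gamma0 w delta0 r l *m (ucol Gamma0 w delta0 r l)^T))
    *m H^T *m invmx Sigma *m H.

(* Q = U_{r+1:h} U_{r+1:h}^T H^T Sigma^-1 H  (0-based columns r..h-1) *)
Definition Qmx Gamma0 w delta0 (r h : nat) : 'M[R]_d :=
  (\sum_(l < n | (r <= l < h)%N)
      (ucol Gamma0 w delta0 r l *m (ucol Gamma0 w delta0 r l)^T))
    *m H^T *m invmx Sigma *m H.

Definition Nmx Gamma0 w delta0 (r h : nat) : 'M[R]_d :=
  1%:M - Pmx Gamma0 w delta0 r - Qmx Gamma0 w delta0 r h.

End EKI.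
End EKIDefs.

(* The Sigma-orthonormal basis w diagonalises the whole iteration.  With the
   Kalman gain K_i = Gamma_i H^T (H Gamma_i H^T + Sigma)^-1, the point v^* solves
   the normal equations, so K_i kills the residual y - H v^* and
   omega_{i+1} = (I - K_i H) omega_i.  The ensemble covariance transforms as
   Gamma_{i+1} = (I - K_i H) Gamma_i (I - K_i H)^T, hence
   Gamma_{i+1} H^T w_l = (1 + delta_{l,i})^-2 Gamma_i H^T w_l and
   delta_{l,i+1} = delta_{l,i} / (1 + delta_{l,i})^2.  Thus every K_i Sigma w_l is
   a multiple of Gamma_0 H^T w_l, which lies in the span of u_1, ..., u_r where
   Q and N vanish: this gives (b) and (c).  The coordinate w_l^T H omega_i of
   P omega_i along u_l is divided by 1 + delta_{l,i} at each step; as its square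
   over delta_{l,i} is invariant and delta_{l,i} <= 1/(2i), it is O(i^-1/2). *)

From HB Require Import structures.
From mathcomp Require Import all_boot all_order all_algebra.
From mathcomp Require Import reals.
From mathcomp Require Import ring lra.
From Stdlib Require Import ClassicalEpsilon.

Set Implicit Arguments.
Unset Strict Implicit.
Unset Printing Implicit Defensive.
Import Order.TTheory GRing.Theory Num.Theory.
Local Open Scope ring_scope.

Lemma orthonormal_basis_eq0 (R : comUnitRingType) n p (S : 'M[R]_n)
    (w : 'I_n -> 'cV[R]_n) (B : 'M[R]_(p, n)) :
  S^T = S -> (forall k l, ((w k)^T *m S *m w l) 0 0 = (k == l)%:R) ->
  (forall l, B *m (S *m w l) = 0) -> B = 0.
Proof.
move=> S_sym w_orth BSw0; pose Wm := \matrix_(i, l) w l i 0.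
have WSW : Wm^T *m S *m Wm = 1%:M.
  apply/matrixP => k l; rewrite [RHS]mxE -w_orth !mxE; apply: eq_bigr => b _.
  by rewrite !mxE; congr (_ * _); apply: eq_bigr => a _; rewrite !mxE.
have SWW : S *m Wm *m Wm^T = 1%:M.
  by have := congr1 trmx (mulmx1C WSW); rewrite !trmx_mul trmxK S_sym trmx1.
have BSW : B *m S *m Wm = 0.
  apply/matrixP => a l; transitivity ((B *m (S *m w l)) a 0).
    by rewrite mulmxA !mxE; apply: eq_bigr => b _; rewrite /Wm !mxE.
  by rewrite BSw0 !mxE.
by rewrite -[B]mulmx1 -SWW !mulmxA BSW !mul0mx.
Qed.

Section PositiveDefinite.
Variable R : realFieldType.

Definition posdef n (S : 'M[R]_n) :=
  forall x : 'cV_n, x != 0 -> 0 < (x^T *m S *m x) 0 0.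

Lemma posdef_quad_eq0 n (S : 'M[R]_n) (x : 'cV_n) :
  posdef S -> (x^T *m S *m x) 0 0 = 0 -> x = 0.
Proof.
move=> pS x0; apply/eqP; apply: contraT => /pS.
by rewrite x0 ltxx.
Qed.

Lemma posdef_gram_eq0 m n (S : 'M[R]_m) (M : 'M_(m, n)) :
  posdef S -> M^T *m S *m M = 0 -> M = 0.
Proof.
move=> pS MSM0; apply/matrixP => i j.
suff /matrixP/(_ i 0) : col j M = 0 by rewrite !mxE.
apply: posdef_quad_eq0 pS _.
rewrite colE trmx_mul !mulmxA -(mulmxA _ M^T) -(mulmxA _ (M^T *m S)) MSM0.
by rewrite mulmx0 mul0mx mxE.
Qed.

Lemma posdef_unit n (S : 'M[R]_n) : posdef S -> S \in unitmx.
Proof.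
move=> pS; rewrite -row_free_unit; apply/inj_row_free => v vS0.
apply: trmx_inj; rewrite trmx0; apply: posdef_quad_eq0 pS _.
by rewrite trmxK vS0 mul0mx mxE.
Qed.

Lemma posdef_invmx n (S : 'M[R]_n) : S^T = S -> posdef S -> posdef (invmx S).
Proof.
move=> sS pS x x0; have uS := posdef_unit pS.
have -> : x^T *m invmx S *m x = (invmx S *m x)^T *m S *m (invmx S *m x).
  by rewrite trmx_mul trmx_inv sS -!mulmxA mulKVmx.
by apply: pS; apply: contra_neq x0 => /(congr1 (mulmx S)); rewrite mulKVmx // mulmx0.
Qed.

Lemma posdef1 n : posdef (1%:M : 'M[R]_n).
Proof.
move=> x x0; rewrite mulmx1 mxE (eq_bigr (fun i => x i 0 ^+ 2)) => [|i _]; last first.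
  by rewrite mxE expr2.
have sq_ge0 i : true -> 0 <= x i 0 ^+ 2 by rewrite sqr_ge0.
rewrite lt_def sumr_ge0 // andbT; apply: contra_neq x0 => /(psumr_eq0P sq_ge0) x2_0.
by apply/matrixP => i j; rewrite (ord1 j) mxE; apply/eqP; rewrite -sqrf_eq0 x2_0.
Qed.

Lemma posdefDl n (A S : 'M[R]_n) :
  (forall x : 'cV_n, 0 <= (x^T *m A *m x) 0 0) -> posdef S -> posdef (A + S).
Proof.
move=> A_ge0 pS x x0; rewrite mulmxDr mulmxDl mxE.
by rewrite (lt_le_trans (pS x x0)) // lerDr.
Qed.

Lemma row_free_gram_unit k p (C : 'M[R]_(k, p)) :
  row_free C -> C *m C^T \in unitmx.
Proof.
move=> fC; rewrite -row_free_unit; apply/inj_row_free => v vCC0.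
apply: (row_free_inj fC); rewrite mul0mx.
suff /(congr1 trmx) : (v *m C)^T = 0 by rewrite trmxK trmx0.
apply: (posdef_gram_eq0 (@posdef1 _)).
by rewrite trmxK mulmx1 trmx_mul mulmxA -(mulmxA v) vCC0 mul0mx.
Qed.

Section WeightedGram.
Variables (m p : nat) (W : 'M[R]_m) (B : 'M[R]_(m, p)).
Hypotheses (W_sym : W^T = W) (W_pd : posdef W).
Local Notation A := (B^T *m W *m B).

Lemma wgram_sym : A^T = A.
Proof. by rewrite !trmx_mul trmxK W_sym mulmxA. Qed.

Lemma ginv_wgram_left (Y : 'M_p) : A *m Y *m A = A -> B *m Y *m A = B.
Proof.
move=> AYA; apply/eqP; rewrite -subr_eq0; apply/eqP; set M := _ - B.
have BWM : B^T *m W *m M = 0.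
  have -> : B^T *m W *m M = A *m Y *m A - A by rewrite mulmxBr !mulmxA.
  by rewrite AYA subrr.
have MT : M^T = (A *m Y^T - 1%:M) *m B^T.
  by rewrite linearB /= trmx_mul wgram_sym trmx_mul mulmxBl mul1mx mulmxA.
apply: (posdef_gram_eq0 W_pd).
have -> : M^T *m W *m M = (A *m Y^T - 1%:M) *m (B^T *m W *m M).
  by rewrite MT !mulmxA.
by rewrite BWM mulmx0.
Qed.

Lemma ginv_wgram_right (Y : 'M_p) : A *m Y *m A = A -> A *m Y *m B^T = B^T.
Proof.
move=> AYA; have AYtA : A *m Y^T *m A = A.
  by rewrite -{1 2}wgram_sym -!trmx_mul mulmxA AYA wgram_sym.
apply: trmx_inj; rewrite trmx_mul trmx_mul wgram_sym trmxK mulmxA.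
exact: ginv_wgram_left.
Qed.

End WeightedGram.
End PositiveDefinite.

Section RealMatrices.
Variable R : realType.

Lemma penrose_rank_factor m k p (B : 'M[R]_(m, k)) (C : 'M[R]_(k, p)) :
  C *m C^T \in unitmx -> B^T *m B \in unitmx -> exists X, penrose (B *m C) X.
Proof.
move=> uCC uBB; set UC := invmx (C *m C^T); set UB := invmx (B^T *m B).
have CK q (Z : 'M_(q, k)) : Z *m C *m C^T *m UC = Z.
  by rewrite -!mulmxA (mulmxA C) mulmxV // mulmx1.
have BK q (Z : 'M_(q, k)) : Z *m UB *m B^T *m B = Z.
  by rewrite -!mulmxA mulVmx // mulmx1.
exists (C^T *m UC *m UB *m B^T).
have AX : B *m C *m (C^T *m UC *m UB *m B^T) = B *m UB *m B^T.
  by rewrite !mulmxA CK.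
have XA : C^T *m UC *m UB *m B^T *m (B *m C) = C^T *m UC *m C.
  by rewrite !mulmxA BK.
split.
- by rewrite AX !mulmxA BK.
- by rewrite XA !mulmxA CK.
- by rewrite AX !trmx_mul trmxK trmx_inv trmx_mul trmxK !mulmxA.
- by rewrite XA !trmx_mul trmxK trmx_inv trmx_mul trmxK !mulmxA.
Qed.

Lemma pinv_penrose m p (A : 'M[R]_(m, p)) : penrose A (pinv A).
Proof.
apply: (epsilon_spec (inhabits 0) (penrose A)).
have BtB_unit : (col_base A)^T *m col_base A \in unitmx.
  rewrite -[X in _ *m X]trmxK row_free_gram_unit //.
  by rewrite /row_free mxrank_tr; exact: col_base_full.
have := penrose_rank_factor (row_free_gram_unit (row_base_free A)) BtB_unit.
by rewrite mulmx_base.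
Qed.

Lemma pinv_ginv m p (A : 'M[R]_(m, p)) : A *m pinv A *m A = A.
Proof. by case: (pinv_penrose A). Qed.

Lemma trmx_emp_cov J d (v : 'I_J -> 'cV[R]_d) : (emp_cov v)^T = emp_cov v.
Proof.
rewrite /emp_cov linearZ /= linear_sum /=; congr (_ *: _).
by apply: eq_bigr => j _; rewrite trmx_mul trmxK.
Qed.

Lemma emp_cov_quadE J d (v : 'I_J -> 'cV[R]_d) (x : 'cV_d) :
  (x^T *m emp_cov v *m x) 0 0 =
  (J.-1%:R)^-1 * \sum_j ((x^T *m (v j - emp_mean v)) 0 0) ^+ 2.
Proof.
rewrite /emp_cov -scalemxAr -scalemxAl mxE; congr (_ * _).
rewrite mulmx_sumr mulmx_suml summxE; apply: eq_bigr => j _.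
set e := v j - emp_mean v.
rewrite mulmxA [x^T *m e]mx11_scalar mul_scalar_mx -scalemxAl mxE.
have -> : e^T *m x = (x^T *m e)^T by rewrite trmx_mul trmxK.
by rewrite [((x^T *m e)^T) 0 0]mxE [(_%:M) 0 0]mxE eqxx mulr1n expr2.
Qed.

Lemma emp_cov_quad_ge0 J d (v : 'I_J -> 'cV[R]_d) (x : 'cV_d) :
  0 <= (x^T *m emp_cov v *m x) 0 0.
Proof.
rewrite emp_cov_quadE mulr_ge0 ?invr_ge0 ?ler0n //.
by apply: sumr_ge0 => j _; apply: sqr_ge0.
Qed.

Lemma emp_cov_quad_eq0 J d (v : 'I_J -> 'cV[R]_d) (x : 'cV_d) :
  (x^T *m emp_cov v *m x) 0 0 = 0 -> emp_cov v *m x = 0.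
Proof.
rewrite emp_cov_quadE => /eqP; rewrite mulf_eq0 => /orP [/eqP c0|/eqP s0].
  by rewrite /emp_cov c0 scale0r mul0mx.
have dev_orth j : (x^T *m (v j - emp_mean v)) 0 0 = 0.
  apply/eqP; rewrite -sqrf_eq0; apply/eqP.
  by apply: (psumr_eq0P _ s0) => // k _; apply: sqr_ge0.
rewrite /emp_cov -scalemxAl mulmx_suml big1 ?scaler0 // => j _.
set e := v j - emp_mean v; rewrite -mulmxA.
have -> : e^T *m x = (x^T *m e)^T by rewrite trmx_mul trmxK.
by rewrite [x^T *m e]mx11_scalar dev_orth tr_scalar_mx mul_mx_scalar scale0r.
Qed.

Lemma emp_cov_affine J d (v v' : 'I_J -> 'cV[R]_d) (M : 'M_d) (c : 'cV_d) :
  (0 < J)%N -> (forall j, v' j = M *m v j + c) ->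
  emp_cov v' = M *m emp_cov v *m M^T.
Proof.
move=> J_gt0 v'E.
have mean' : emp_mean v' = M *m emp_mean v + c.
  rewrite /emp_mean (eq_bigr _ (fun j _ => v'E j)) big_split /= sumr_const card_ord.
  rewrite scalerDr -mulmx_sumr scalemxAr; congr (_ + _).
  by rewrite -scaler_nat scalerA mulVf ?scale1r // pnatr_eq0 -lt0n.
rewrite /emp_cov -scalemxAr -scalemxAl; congr (_ *: _).
rewrite mulmx_sumr mulmx_suml; apply: eq_bigr => j _.
have -> : v' j - emp_mean v' = M *m (v j - emp_mean v).
  by rewrite v'E mean' mulmxBr opprD addrACA subrr addr0.
by rewrite trmx_mul !mulmxA.
Qed.

Lemma vnorm_le_sum_norm n (x : 'cV[R]_n) : vnorm x <= \sum_i `|x i 0|.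
Proof.
have sum_ge0 : 0 <= \sum_i `|x i 0| by apply: sumr_ge0.
rewrite /vnorm -(ger0_norm sum_ge0) -sqrtr_sqr ler_wsqrtr //.
have sqr_sum (s : seq 'I_n) :
    \sum_(i <- s) `|x i 0| ^+ 2 <= (\sum_(i <- s) `|x i 0|) ^+ 2.
  elim: s => [|a s IH]; first by rewrite !big_nil expr0n.
  rewrite !big_cons; have := normr_ge0 (x a 0).
  have : 0 <= \sum_(i <- s) `|x i 0| by apply: sumr_ge0.
  nra.
rewrite (eq_bigr (fun i => `|x i 0| ^+ 2)) ?sqr_sum // => i _.
by rewrite real_normK ?num_real.
Qed.

End RealMatrices.

Lemma recursive_decay_invsqrt (R : rcfType) (a e : nat -> R) : 0 < e 0%N ->
  (forall i, e i.+1 = e i / (1 + e i) ^+ 2) ->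
  (forall i, a i.+1 = a i / (1 + e i)) ->
  forall i, (0 < i)%N -> `|a i| <= Num.sqrt (a 0%N ^+ 2 / e 0%N) / Num.sqrt i%:R.
Proof.
move=> e0_gt0 eS aS.
(* 1 / e grows by at least 2 at each step, while a^2 / e stays constant. *)
have inv i :
    [/\ 0 < e i, a i ^+ 2 * e 0%N = a 0%N ^+ 2 * e i & 2 * i%:R * e i <= 1].
  elim: i => [|i [ei_gt0 aeE ei_le]]; first by rewrite mulr0 mul0r ler01.
  have one_ei_gt0 : 0 < 1 + e i by rewrite addr_gt0.
  split; first by rewrite eS divr_gt0 // exprn_gt0.
    by rewrite aS eS expr_div_n mulrAC aeE mulrA.
  rewrite eS mulrA ler_pdivrMr ?exprn_gt0 // mul1r -natr1; nra.
move=> i i_gt0; have [ei_gt0 aeE ei_le] := inv i.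
have sqrti_gt0 : 0 < Num.sqrt (i%:R : R) by rewrite sqrtr_gt0 ltr0n.
rewrite ler_pdivlMr // -sqrtr_sqr -sqrtrM ?sqr_ge0 // ler_wsqrtr //.
have -> : a i ^+ 2 = a 0%N ^+ 2 / e 0%N * e i by rewrite mulrAC -aeE mulfK // gt_eqF.
have : 0 <= a 0%N ^+ 2 / e 0%N by rewrite divr_ge0 ?sqr_ge0 // ltW.
have : 0 <= i%:R :> R by rewrite ler0n.
nra.
Qed.

Section EKIAnalysis.
Variables (R : realType) (n d J h r : nat).
Variables (H : 'M[R]_(n, d)) (Sigma : 'M[R]_n) (y : 'cV[R]_n).
Variables (v0 : 'I_J -> 'cV[R]_d) (w : 'I_n -> 'cV[R]_n) (delta : 'I_n -> nat -> R).

Local Notation v i := (eki H Sigma y v0 i).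
Local Notation Gamma i := (emp_cov (v i)).
Local Notation S i := (H *m Gamma i *m H^T + Sigma).
Local Notation K i := (Gamma i *m H^T *m invmx (S i)).
Local Notation g l := (H^T *m w l).
Local Notation vs := (vstar H Sigma y).
Local Notation omega i j := (v i j - vs).

Hypotheses (Sigma_spd : spd Sigma) (J_ge2 : (2 <= J)%N).
Hypothesis w_orthonormal :
  forall k l : 'I_n, ((w k)^T *m Sigma *m w l) 0 0 = (k == l)%:R.
Hypothesis w_eigen : forall (l : 'I_n) (i : nat),
  H *m Gamma i *m H^T *m w l = delta l i *: (Sigma *m w l).

Lemma Sigma_sym : Sigma^T = Sigma. Proof. by case: Sigma_spd. Qed.
Lemma Sigma_posdef : posdef Sigma. Proof. by case: Sigma_spd. Qed.
Lemma Sigma_unit : Sigma \in unitmx. Proof. exact: posdef_unit Sigma_posdef. Qed.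
Lemma invSigma_sym : (invmx Sigma)^T = invmx Sigma.
Proof. by rewrite trmx_inv Sigma_sym. Qed.
Lemma invSigma_posdef : posdef (invmx Sigma).
Proof. exact: posdef_invmx Sigma_sym Sigma_posdef. Qed.

Lemma delta_quadE l i : delta l i = ((g l)^T *m Gamma i *m g l) 0 0.
Proof.
have -> : (g l)^T *m Gamma i *m g l = (w l)^T *m (H *m Gamma i *m H^T *m w l).
  by rewrite trmx_mul trmxK !mulmxA.
by rewrite w_eigen -scalemxAr mxE mulmxA w_orthonormal eqxx mulr1.
Qed.

Lemma delta_ge0 l i : 0 <= delta l i.
Proof. by rewrite delta_quadE emp_cov_quad_ge0. Qed.

Lemma add1_delta_neq0 l i : 1 + delta l i != 0.
Proof. by rewrite gt_eqF // ltr_pwDl // delta_ge0. Qed.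

Lemma S_sym i : (S i)^T = S i.
Proof. by rewrite linearD /= !trmx_mul trmxK trmx_emp_cov Sigma_sym mulmxA. Qed.

Lemma S_unit i : S i \in unitmx.
Proof.
apply/posdef_unit/posdefDl/Sigma_posdef => x.
rewrite (_ : x^T *m _ *m x = (H^T *m x)^T *m Gamma i *m (H^T *m x)).
  exact: emp_cov_quad_ge0.
by rewrite trmx_mul trmxK !mulmxA.
Qed.

Lemma invS_Sigma_w i l :
  invmx (S i) *m (Sigma *m w l) = (1 + delta l i)^-1 *: w l.
Proof.
have S_w : S i *m w l = (1 + delta l i) *: (Sigma *m w l).
  by rewrite mulmxDl w_eigen scalerDl scale1r addrC.
rewrite -[w l in RHS](mulKmx (S_unit i)) S_w -(scalemxAr _ (invmx _)) scalerA.
by rewrite mulVf ?scale1r // add1_delta_neq0.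
Qed.

Lemma gain_Sigma_w i l :
  K i *m (Sigma *m w l) = (1 + delta l i)^-1 *: (Gamma i *m g l).
Proof. by rewrite -mulmxA invS_Sigma_w -scalemxAr -mulmxA. Qed.

Lemma trgain_g i l : (K i)^T *m g l = (delta l i / (1 + delta l i)) *: w l.
Proof.
rewrite !trmx_mul trmx_inv S_sym trmxK trmx_emp_cov.
have -> : invmx (S i) *m (H *m Gamma i) *m g l
        = invmx (S i) *m (H *m Gamma i *m H^T *m w l) by rewrite !mulmxA.
by rewrite w_eigen -scalemxAr invS_Sigma_w scalerA.
Qed.

Lemma ekiS i j : v i.+1 j = v i j + K i *m (y - H *m v i j).
Proof. by []. Qed.

Lemma cov_step i : Gamma i.+1 = (1%:M - K i *m H) *m Gamma i *m (1%:M - K i *m H)^T.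
Proof.
apply: (emp_cov_affine (c := K i *m y)) => [|j]; first exact: leq_trans J_ge2.
by rewrite ekiS mulmxBr mulmxBl mul1mx !mulmxA addrCA addrC.
Qed.

Lemma cov_step_g i l :
  Gamma i.+1 *m g l = ((1 + delta l i) ^+ 2)^-1 *: (Gamma i *m g l).
Proof.
have dl1 := add1_delta_neq0 l i.
have right_g : (1%:M - K i *m H)^T *m g l = (1 + delta l i)^-1 *: g l.
  rewrite linearB /= trmx1 trmx_mul mulmxBl mul1mx -(mulmxA H^T) trgain_g -scalemxAr.
  by rewrite -{1}[g l]scale1r -scalerBl; congr (_ *: _); field.
have left_Gg : (1%:M - K i *m H) *m (Gamma i *m g l)
    = (1 + delta l i)^-1 *: (Gamma i *m g l).
  rewrite mulmxBl mul1mx.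
  have -> : K i *m H *m (Gamma i *m g l) = K i *m (H *m Gamma i *m H^T *m w l).
    by rewrite !mulmxA.
  rewrite w_eigen -scalemxAr gain_Sigma_w scalerA.
  by rewrite -{1}[Gamma i *m g l]scale1r -scalerBl; congr (_ *: _); field.
rewrite cov_step; set M := 1%:M - K i *m H.
have -> : M *m Gamma i *m M^T *m g l = M *m (Gamma i *m (M^T *m g l)).
  by rewrite !mulmxA.
by rewrite right_g -!scalemxAr left_Gg scalerA -invfM -expr2.
Qed.

Lemma cov_g_collinear i l : exists c : R, Gamma i *m g l = c *: (Gamma 0 *m g l).
Proof.
elim: i => [|i [c Gg]]; first by exists 1; rewrite scale1r.
by exists (((1 + delta l i) ^+ 2)^-1 * c); rewrite cov_step_g Gg scalerA.
Qed.

Lemma delta_step l i : delta l i.+1 = delta l i / (1 + delta l i) ^+ 2.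
Proof.
rewrite delta_quadE -mulmxA cov_step_g -scalemxAr mxE (mulmxA (g l)^T).
by rewrite -delta_quadE mulrC.
Qed.

Lemma normal_residual : H^T *m invmx Sigma *m (y - H *m vs) = 0.
Proof.
have := ginv_wgram_right invSigma_sym invSigma_posdef (pinv_ginv _).
by rewrite /vstar /Hplus mulmxBr !mulmxA => ->; rewrite subrr.
Qed.

Lemma gain_residual i : K i *m (y - H *m vs) = 0.
Proof.
set z := y - H *m vs.
have HtSz : H^T *m (invmx Sigma *m z) = 0 by rewrite mulmxA normal_residual.
have S_Sz : S i *m (invmx Sigma *m z) = z.
  by rewrite mulmxDl -mulmxA HtSz mulmx0 add0r mulmxA mulmxV ?Sigma_unit ?mul1mx.
by rewrite -S_Sz -mulmxA mulKmx ?S_unit // -mulmxA HtSz mulmx0.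
Qed.

Lemma omega_step i j : omega i.+1 j = omega i j - K i *m H *m omega i j.
Proof.
rewrite ekiS; have -> : y - H *m v i j = (y - H *m vs) - H *m omega i j.
  by rewrite mulmxBr opprB addrA subrK.
by rewrite mulmxBr gain_residual sub0r mulmxA addrAC.
Qed.

Lemma coord_step k i j :
  ((w k)^T *m H *m omega i.+1 j) 0 0
  = ((w k)^T *m H *m omega i j) 0 0 / (1 + delta k i).
Proof.
have wHK : (w k)^T *m H *m K i = (delta k i / (1 + delta k i)) *: (w k)^T.
  rewrite -[_ *m K i]trmxK trmx_mul [((w k)^T *m H)^T]trmx_mul trmxK.
  by rewrite trgain_g linearZ.
rewrite omega_step mulmxBr (mulmxA _ (K i *m H)) (mulmxA _ (K i)) wHK.
rewrite -!scalemxAl -[X in X - _]scale1r -scalerBl mxE.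
by rewrite mulrC; congr (_ * _); field; exact: add1_delta_neq0.
Qed.

Hypothesis r_le_h : (r <= h)%N.
Hypothesis delta0_pos : forall l : 'I_n, (l < r)%N -> 0 < delta l 0.
Hypothesis delta0_zero : forall l : 'I_n, (r <= l < h)%N -> delta l 0 = 0.
Hypothesis w_range : forall l : 'I_n, (l < h)%N ->
  exists x : 'cV[R]_d, w l = invmx Sigma *m H *m x.
Hypothesis w_ker : forall l : 'I_n, (h <= l)%N -> H^T *m w l = 0.

Local Notation u l := (ucol H Sigma (emp_cov v0) w (fun l => delta l 0) r l).

Lemma H_u (l : 'I_n) : (l < h)%N -> H *m u l = Sigma *m w l.
Proof.
rewrite /ucol; case: (ltnP l r) => [lr _ | rl lh].
  rewrite -(scalemxAr _ H) !mulmxA (w_eigen l 0) scalerA mulVf ?scale1r //.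
  by rewrite gt_eqF ?delta0_pos.
have [x ->] := w_range lh.
have HXA := ginv_wgram_left (B := H) invSigma_sym invSigma_posdef (pinv_ginv _).
have SSx : Sigma *m (invmx Sigma *m H *m x) = H *m x.
  by rewrite !mulmxA mulmxV ?Sigma_unit // mul1mx.
rewrite -mulmxA SSx /Hplus.
by move: (congr1 (mulmx^~ x) HXA); rewrite /= !mulmxA.
Qed.

Section SpanProjection.
Variable p : pred 'I_n.
Hypothesis p_lt_h : forall k, p k -> (k < h)%N.
Local Notation Pi := ((\sum_(k < n | p k) u k *m (u k)^T) *m H^T *m invmx Sigma *m H).

Lemma span_proj_apply x :
  Pi *m x = \sum_(k < n | p k) ((w k)^T *m H *m x) 0 0 *: u k.
Proof.
rewrite -!mulmxA mulmx_suml; apply: eq_bigr => k pk; rewrite -mulmxA.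
have -> : (u k)^T *m (H^T *m (invmx Sigma *m (H *m x))) = (w k)^T *m H *m x.
  rewrite mulmxA -trmx_mul H_u ?p_lt_h // trmx_mul Sigma_sym !mulmxA.
  by rewrite -(mulmxA _ Sigma) mulmxV ?Sigma_unit // mulmx1.
by rewrite -mul_mx_scalar -mx11_scalar.
Qed.

Lemma span_proj_u (l : 'I_n) : (l < h)%N -> Pi *m u l = if p l then u l else 0.
Proof.
move=> lh; rewrite span_proj_apply.
have coord k : ((w k)^T *m H *m u l) 0 0 = (k == l)%:R.
  by rewrite -mulmxA H_u // mulmxA w_orthonormal.
case: ifP => pl; last first.
  rewrite big1 // => k pk; rewrite coord; case: eqVneq => [kl|_]; last exact: scale0r.
  by rewrite kl pl in pk.
rewrite (bigD1 l) //= coord eqxx scale1r big1 ?addr0 // => k /andP [_ kl].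
by rewrite coord (negPf kl) scale0r.
Qed.

End SpanProjection.

Lemma cov0_g (l : 'I_n) : Gamma 0 *m g l = if (l < r)%N then delta l 0 *: u l else 0.
Proof.
rewrite /ucol; case: (ltnP l r) => [lr | rl].
  by rewrite scalerA divff ?scale1r ?mulmxA // gt_eqF ?delta0_pos.
case: (ltnP l h) => lh; last by rewrite w_ker // mulmx0.
by apply: emp_cov_quad_eq0; rewrite -delta_quadE delta0_zero // rl lh.
Qed.

Lemma mulmx_gain_eq0 p (B : 'M[R]_(p, d)) :
  (forall l : 'I_n, (l < r)%N -> B *m u l = 0) -> forall i, B *m K i = 0.
Proof.
move=> Bu0 i; apply: (orthonormal_basis_eq0 Sigma_sym w_orthonormal) => l.
have [c Gg] := cov_g_collinear i l.
rewrite -(mulmxA B) gain_Sigma_w Gg cov0_g; case: ifP => [lr|_]; last first.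
  by rewrite !scaler0 mulmx0.
by rewrite -!scalemxAr Bu0 // !scaler0.
Qed.

Lemma omega_invariant p (B : 'M[R]_(p, d)) :
  (forall l : 'I_n, (l < r)%N -> B *m u l = 0) ->
  forall i j, B *m omega i j = B *m omega 0 j.
Proof.
move=> Bu0 i j; elim: i => // i IH.
rewrite omega_step mulmxBr -IH.
have -> : B *m (K i *m H *m omega i j) = B *m K i *m (H *m omega i j).
  by rewrite !mulmxA.
by rewrite mulmx_gain_eq0 // mul0mx subr0.
Qed.

Local Notation Pm := (Pmx H Sigma (emp_cov v0) w (fun l => delta l 0) r).
Local Notation Qm := (Qmx H Sigma (emp_cov v0) w (fun l => delta l 0) r h).
Local Notation Nm := (Nmx H Sigma (emp_cov v0) w (fun l => delta l 0) r h).

Lemma lt_r_lt_h (k : 'I_n) : (k < r)%N -> (k < h)%N.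
Proof. by move=> kr; apply: leq_trans kr r_le_h. Qed.

Lemma P_u (l : 'I_n) : (l < r)%N -> Pm *m u l = u l.
Proof. by move=> lr; rewrite span_proj_u ?lr //; apply: lt_r_lt_h. Qed.

Lemma Q_u (l : 'I_n) : (l < r)%N -> Qm *m u l = 0.
Proof.
move=> lr; rewrite span_proj_u; first by rewrite leqNgt lr.
  by move=> k /andP [].
exact: lt_r_lt_h.
Qed.

Lemma N_u (l : 'I_n) : (l < r)%N -> Nm *m u l = 0.
Proof. by move=> lr; rewrite !mulmxBl mul1mx P_u // Q_u // subrr subr0. Qed.

Lemma P_omega_decay j : exists C : R, exists i0 : nat, forall i : nat, (i0 <= i)%N ->
  vnorm (Pm *m omega i j) <= C / Num.sqrt (i%:R).
Proof.
pose a k i := ((w k)^T *m H *m omega i j) 0 0.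
pose C k := Num.sqrt (a k 0%N ^+ 2 / delta k 0%N).
have a_decay (k : 'I_n) : (k < r)%N -> forall i, (0 < i)%N ->
    `|a k i| <= C k / Num.sqrt (i%:R : R).
  move=> kr; apply: recursive_decay_invsqrt; first exact: delta0_pos.
    exact: delta_step.
  by move=> i; rewrite /a coord_step.
exists (\sum_b \sum_(k < n | (k < r)%N) C k * `|u k b 0|), 1%N => i i_gt0.
apply: le_trans (vnorm_le_sum_norm _) _.
rewrite mulr_suml; apply: ler_sum => b _.
rewrite span_proj_apply; last exact: lt_r_lt_h.
rewrite summxE mulr_suml.
apply: le_trans (ler_norm_sum _ _ _) _.
apply: ler_sum => k kr.
by rewrite mxE normrM mulrAC ler_wpM2r ?a_decay.
Qed.

End EKIAnalysis.

Theorem theorem3p16 (R : realType) (n d J h r : nat)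
  (H : 'M[R]_(n, d)) (Sigma : 'M[R]_n) (y : 'cV[R]_n)
  (v0 : 'I_J -> 'cV[R]_d)
  (w : 'I_n -> 'cV[R]_n) (delta : 'I_n -> nat -> R) :
  \rank H = h ->
  spd Sigma ->
  (2 <= J)%N ->
  (* w is Sigma-orthonormal (hence a basis of R^n) *)
  (forall k l : 'I_n, ((w k)^T *m Sigma *m w l) 0 0 = (k == l)%:R) ->
  (* each w_l is a generalized eigenvector of (H Gamma_i H^T, Sigma)
     for every i, with eigenvalue delta l i *)
  (forall (l : 'I_n) (i : nat),
      H *m emp_cov (eki H Sigma y v0 i) *m H^T *m w l
      = delta l i *: (Sigma *m w l)) ->
  (r <= h)%N ->
  (* w_0..w_{r-1}: positive eigenvalues of the pencil at i = 0 *)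
  (forall l : 'I_n, (l < r)%N -> 0 < delta l 0) ->
  (* w_r..w_{h-1}: eigenvalue zero *)
  (forall l : 'I_n, (r <= l < h)%N -> delta l 0 = 0) ->
  (* w_0..w_{h-1} lie in Ran(Sigma^-1 H) *)
  (forall l : 'I_n, (l < h)%N ->
      exists x : 'cV[R]_d, w l = invmx Sigma *m H *m x) ->
  (* w_h..w_{n-1} lie in Ker(H^T) *)
  (forall l : 'I_n, (h <= l)%N -> H^T *m w l = 0) ->
  let Gamma0 := emp_cov v0 in
  let omega (i : nat) (j : 'I_J) := eki H Sigma y v0 i j - vstar H Sigma y in
  let P := Pmx H Sigma Gamma0 w (fun l => delta l 0) r in
  let Q := Qmx H Sigma Gamma0 w (fun l => delta l 0) r h in
  let N := Nmx H Sigma Gamma0 w (fun l => delta l 0) r h in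
  (forall j : 'I_J, exists C : R, exists i0 : nat, forall i : nat, (i0 <= i)%N ->
       vnorm (P *m omega i j) <= C / Num.sqrt (i%:R)) /\
  (forall (j : 'I_J) (i : nat), Q *m omega i j = Q *m omega 0%N j) /\
  (forall (j : 'I_J) (i : nat), N *m omega i j = N *m omega 0%N j).
Proof.
move=> _ Sigma_spd J_ge2 w_orth w_eigen r_le_h delta0_pos delta0_zero w_range w_ker.
move=> Gamma0 omega P Q N.
have invariant :=
  omega_invariant Sigma_spd J_ge2 w_orth w_eigen delta0_pos delta0_zero w_ker.
have Q_u := Q_u Sigma_spd w_orth w_eigen r_le_h delta0_pos w_range.
have N_u := N_u Sigma_spd w_orth w_eigen r_le_h delta0_pos w_range.
split; [|split] => j.
- exact: P_omega_decay Sigma_spd J_ge2 w_orth w_eigen r_le_h delta0_pos w_range j.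
- by move=> i; apply: invariant Q_u i j.
- by move=> i; apply: invariant N_u i j.
Qed.
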